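(* Let $S$ be a commutative semigroup and $H$ a subsemigroup of $S$. Let $\{H_i : i\in I\}$ be a nonempty family ($I\neq\emptyset$) of subsets of $S$ such that $H=\bigcap_{i\in I}\mathrm{Sep}\,H_i$. Then the relation $$P(H;H_i,I)=\{(a,b)\in S\times S:\ H_i\dots a=H_i\dots b \text{ for all } i\in I\}$$ is a monoid congruence on $S$ such that $H$ is a congruence class and is the identity element of the factor semigroup $S/P(H;H_i,I)$. Conversely, for every monoid congruence $p$ on a commutative semigroup $S$ there exist a subsemigroup $H$ of $S$ and a nonempty family $\{H_i: i\in I\}$ of subsets of $S$ with $H=\bigcap_{i\in I}\mathrm{Sep}\,H_i$ such that $p=P(H;H_i,I)$.
   Context: For a semigroup $S$ and $A\subseteq S$, $\mathrm{Sep}\,A$ (the separator of $A$) is the set of all $x\in S$ with $xA\subseteq A$, $Ax\subseteq A$, $x(S\setminus A)\subseteq S\setminus A$ and $(S\setminus A)x\subseteq S\setminus A$. For $A\subseteq S$ and $a\in S$, $A\dots a=\{(x,y)\in S\times S:\ xay\in A\}$. A congruence $p$ on $S$ is a monoid congruence if the factor semigroup $S/p$ is a monoid (has an identity element). *)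

Section Defs.
Context {S : Type} (mul : S -> S -> S).

Definition associative_op : Prop :=
  forall x y z, mul x (mul y z) = mul (mul x y) z.
Definition commutative_op : Prop := forall x y, mul x y = mul y x.

Definition subsemigroup (H : S -> Prop) : Prop :=
  (exists h, H h) /\ (forall x y, H x -> H y -> H (mul x y)).

Definition Sep (A : S -> Prop) (x : S) : Prop :=
  (forall a, A a -> A (mul x a)) /\ (forall a, A a -> A (mul a x)) /\
  (forall b, ~ A b -> ~ A (mul x b)) /\ (forall b, ~ A b -> ~ A (mul b x)).

Definition dots (A : S -> Prop) (a : S) (xy : S * S) : Prop :=
  A (mul (mul (fst xy) a) (snd xy)).

(* P(H; H_i, I) = { (a,b) | H_i...a = H_i...b for all i }  (H only a label) *)
Definition Prel {I : Type} (Hs : I -> S -> Prop) (a b : S) : Prop :=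
  forall i, forall xy : S * S, dots (Hs i) a xy <-> dots (Hs i) b xy.

Definition congruence (p : S -> S -> Prop) : Prop :=
  (forall a, p a a) /\ (forall a b, p a b -> p b a) /\
  (forall a b c, p a b -> p b c -> p a c) /\
  (forall a b c, p a b -> p (mul c a) (mul c b) /\ p (mul a c) (mul b c)).

(* the factor semigroup S/p has an identity element (the class of e) *)
Definition monoid_congruence (p : S -> S -> Prop) : Prop :=
  congruence p /\ exists e, forall s, p (mul e s) s /\ p (mul s e) s.

Definition is_class (p : S -> S -> Prop) (H : S -> Prop) : Prop :=
  exists a, forall x, H x <-> p a x.

Definition identity_class (p : S -> S -> Prop) (H : S -> Prop) : Prop :=
  is_class p H /\ forall h s, H h -> p (mul h s) s /\ p (mul s h) s.

End Defs.

(** Every separator [Sep A] acts on [A] by "translations that do not move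
    membership", so in a commutative semigroup multiplying by an element of
    [H = ⋂ Sep H_i] changes no set [H_i...a]; hence [H] is collapsed onto one
    class of [P(H; H_i, I)] which acts as the identity of the quotient.
    Conversely, a monoid congruence [p] with identity class [p e] is recovered
    as [P] for the family of all its classes: [a] and [b] are in the same class
    iff they lie in the same classes after multiplication on both sides, and
    [Sep] of every class is exactly the identity class. *)

From Stdlib Require Import Classical.

Section CommutativeSemigroup.

Variables (S : Type) (mul : S -> S -> S).
Hypothesis mulA : associative_op mul.
Hypothesis mulC : commutative_op mul.

Lemma Sep_memMl (A : S -> Prop) h z : Sep mul A h -> A (mul h z) <-> A z.
Proof.
intros [memMl [_ [nmemMl _]]]; split; intro Az; auto.
destruct (classic (A z)) as [|nAz]; [assumption|].
exfalso; exact (nmemMl z nAz Az).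
Qed.

Section SeparatorRelation.

Variables (I : Type) (Hs : I -> S -> Prop).

Lemma Prel_congruence : congruence mul (Prel mul Hs).
Proof.
unfold congruence, Prel, dots; split; [|split; [|split]].
- intros; tauto.
- intros a b ab i xy; rewrite ab; tauto.
- intros a b c ab bc i xy; rewrite ab, bc; tauto.
- intros a b c ab; split; intros i [x y]; simpl.
  + rewrite !mulA; exact (ab i (mul x c, y)).
  + rewrite !(mulA x), <- !(mulA _ c y); exact (ab i (x, mul c y)).
Qed.

Lemma Prel_Sep_mull h s :
  (forall i, Sep mul (Hs i) h) -> Prel mul Hs (mul h s) s.
Proof.
intros Seph i [x y]; unfold dots; simpl.
replace (mul (mul x (mul h s)) y) with (mul h (mul (mul x s) y)).
- apply Sep_memMl, Seph.
- rewrite (mulA x h s), (mulC x h), <- (mulA h x s), <- (mulA h); reflexivity.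
Qed.

Lemma Prel_Sep_class h x :
  (forall i, Sep mul (Hs i) h) ->
  Prel mul Hs h x <-> (forall i, Sep mul (Hs i) x).
Proof.
intros Seph; split.
- intros hx i.
  (* [Hs i a <-> Hs i (h (h a)) <-> Hs i (h (x a)) <-> Hs i (x a)] *)
  assert (memMx : forall a, Hs i a <-> Hs i (mul x a)).
  { intro a.
    rewrite <- (Sep_memMl _ h a (Seph i)), <- (Sep_memMl _ h (mul h a) (Seph i)).
    rewrite <- (Sep_memMl _ h (mul x a) (Seph i)), (mulA h h a), (mulA h x a).
    exact (hx i (h, a)). }
  unfold Sep; repeat split; intros a Ha; try rewrite (mulC a x);
    rewrite <- memMx; assumption.
- intros Sepx.
  destruct Prel_congruence as [_ [Prel_sym [Prel_trans _]]].
  apply Prel_trans with (mul x h).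
  + apply Prel_sym, Prel_Sep_mull, Sepx.
  + rewrite mulC; apply Prel_Sep_mull, Seph.
Qed.

End SeparatorRelation.

Section MonoidCongruence.

Variables (p : S -> S -> Prop) (e : S).
Hypothesis p_congr : congruence mul p.
Hypothesis e_unit : forall s, p (mul e s) s /\ p (mul s e) s.

Lemma unit_class_mull x a : p e x -> p (mul x a) a.
Proof.
destruct p_congr as [_ [p_sym [p_trans p_compat]]].
intros ex; apply p_trans with (mul e a); [|apply e_unit].
exact (proj2 (p_compat x e a (p_sym e x ex))).
Qed.

Lemma unit_class_subsemigroup : subsemigroup mul (p e).
Proof.
destruct p_congr as [p_refl [p_sym [p_trans _]]].
split; [exists e; apply p_refl|].
intros x y ex ey; apply p_trans with y; [exact ey|].
apply p_sym, unit_class_mull, ex.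
Qed.

Lemma Sep_classes x : p e x <-> (forall i, Sep mul (p i) x).
Proof.
destruct p_congr as [p_refl [p_sym [p_trans _]]]; split.
- intros ex i; unfold Sep; repeat split; intros a Ha; try rewrite (mulC a x).
  + exact (p_trans _ _ _ Ha (p_sym _ _ (unit_class_mull x a ex))).
  + exact (p_trans _ _ _ Ha (p_sym _ _ (unit_class_mull x a ex))).
  + intro ixa; exact (Ha (p_trans _ _ _ ixa (unit_class_mull x a ex))).
  + intro ixa; exact (Ha (p_trans _ _ _ ixa (unit_class_mull x a ex))).
- intros Sepx.
  (* [x] maps the class of [e] into itself, and [x e] is [p]-equivalent to [x]. *)
  apply p_trans with (mul x e); [apply (Sepx e), p_refl | apply e_unit].
Qed.

Lemma congruence_Prel_classes a b : p a b <-> Prel mul p a b.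
Proof.
destruct p_congr as [p_refl [p_sym [p_trans p_compat]]]; split.
- intros ab i [u v]; unfold dots; simpl.
  assert (uabv : p (mul (mul u a) v) (mul (mul u b) v)).
  { apply p_compat, p_compat, ab. }
  split; intro; eauto.
- (* take the class of [a] and the context [e _ e] *)
  intros ab.
  assert (e_ctx : forall z, p (mul (mul e z) e) z).
  { intro z; apply p_trans with (mul e z); apply e_unit. }
  apply p_trans with (mul (mul e b) e); [|apply e_ctx].
  apply (ab a (e, e)), p_sym, e_ctx.
Qed.

End MonoidCongruence.

End CommutativeSemigroup.

Theorem theorem3 :
  (forall (S : Type) (mul : S -> S -> S),
     associative_op mul -> commutative_op mul ->
     forall (H : S -> Prop), subsemigroup mul H ->
     forall (I : Type) (Hs : I -> S -> Prop), inhabited I ->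
     (forall x, H x <-> (forall i, Sep mul (Hs i) x)) ->
     monoid_congruence mul (Prel mul Hs) /\
     identity_class mul (Prel mul Hs) H)
  /\
  (forall (S : Type) (mul : S -> S -> S),
     associative_op mul -> commutative_op mul ->
     forall p : S -> S -> Prop, monoid_congruence mul p ->
     exists (H : S -> Prop) (I : Type) (Hs : I -> S -> Prop),
       subsemigroup mul H /\ inhabited I /\
       (forall x, H x <-> (forall i, Sep mul (Hs i) x)) /\
       (forall a b, p a b <-> Prel mul Hs a b)).
Proof.
split.
-
  intros S mul mulA mulC H [[h Hh] _] I Hs _ H_Sep.
  assert (Prel_unit : forall g s, H g ->
            Prel mul Hs (mul g s) s /\ Prel mul Hs (mul s g) s).
  { intros g s Hg; rewrite (mulC s g).
    split; apply Prel_Sep_mull; auto; apply H_Sep, Hg. }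
  split; [split; [apply Prel_congruence, mulA | exists h; auto]|].
  split; [|exact Prel_unit].
  exists h; intro x; rewrite H_Sep, (Prel_Sep_class _ _ mulA mulC); [tauto | apply H_Sep, Hh].
- intros S mul mulA mulC p [p_congr [e e_unit]].
  exists (p e), S, p.
  split; [apply unit_class_subsemigroup with (e := e); auto|].
  split; [constructor; exact e|].
  split; intros; [apply (Sep_classes _ _ mulC) | apply congruence_Prel_classes with (e := e)]; auto.
Qed.
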